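(* Let $a,b,c,y,\alpha$ be real numbers with $0<c<y<1$ and $y<b<a$. Then \[ \int_{c}^{y}\frac{1-\alpha u}{1-u^2}\,\frac{u\,\mathrm{d}u}{\sqrt{(a-u)(b-u)(u-c)}} =\frac{\sqrt{y-c}}{(1-c^2)\sqrt{(a-c)(b-c)}}\left(2c(1-c\alpha)\,X+\frac23(1-2c\alpha)(y-c)\,Y-\frac25\,\alpha\,(y-c)^2\,Z\right), \] where, writing $\mathbf{x}=\left(\frac{y-c}{1-c},\,-\frac{y-c}{1+c},\,-\frac{y-c}{c-a},\,-\frac{y-c}{c-b}\right)$, \[ X=\mathrm{F}_{D}^{(4)}\left(\tfrac12;1,1,\tfrac12,\tfrac12;\tfrac32;\mathbf{x}\right),\quad Y=\mathrm{F}_{D}^{(4)}\left(\tfrac32;1,1,\tfrac12,\tfrac12;\tfrac52;\mathbf{x}\right),\quad Z=\mathrm{F}_{D}^{(4)}\left(\tfrac52;1,1,\tfrac12,\tfrac12;\tfrac72;\mathbf{x}\right). \]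
   Context: For $n\ge1$, the Lauricella hypergeometric function of $n$ variables is \[ \mathrm{F}_{D}^{(n)}(a;b_1,\dots,b_n;c;x_1,\dots,x_n)=\sum_{m_1,\dots,m_n\ge0}\frac{(a)_{m_1+\cdots+m_n}(b_1)_{m_1}\cdots(b_n)_{m_n}}{(c)_{m_1+\cdots+m_n}\,m_1!\cdots m_n!}\,x_1^{m_1}\cdots x_n^{m_n},\qquad |x_i|<1, \] where $(\lambda)_m=\Gamma(\lambda+m)/\Gamma(\lambda)$ is the Pochhammer symbol; for $\operatorname{Re}c>\operatorname{Re}a>0$ it equals $\frac{\Gamma(c)}{\Gamma(a)\Gamma(c-a)}\int_0^1 u^{a-1}(1-u)^{c-a-1}\prod_{i=1}^n(1-x_iu)^{-b_i}\,\mathrm{d}u$, which gives its analytic continuation to $x_i\notin[1,\infty)$. *)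

From Stdlib Require Import Reals Lra List.
From Coquelicot Require Import Coquelicot.
Import ListNotations.
Open Scope R_scope.

Fixpoint poch (l : R) (m : nat) : R :=
  match m with
  | O => 1
  | S m' => poch l m' * (l + INR m')
  end.

(* Sum of g over all multi-indices ms : list nat of length n with total N. *)
Fixpoint compsum (n N : nat) (g : list nat -> R) : R :=
  match n with
  | O => if Nat.eqb N 0 then g nil else 0
  | S n' => sum_f_R0 (fun k => compsum n' (N - k) (fun l => g (k :: l))) N
  end.

Fixpoint lauricella_prod (bs xs : list R) (ms : list nat) : R :=
  match bs, xs, ms with
  | b :: bs', x :: xs', m :: ms' =>
      poch b m / INR (Factorial.fact m) * x ^ m * lauricella_prod bs' xs' ms'
  | _, _, _ => 1
  end.

(* Lauricella F_D^{(n)}(a; b_1..b_n; c; x_1..x_n), n = length bs (= length xs),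
   as its defining multiple power series, summed by total degree
   |m| = m_1 + ... + m_n (the series converges absolutely for |x_i| < 1). *)
Definition LauricellaFD (a : R) (bs : list R) (c : R) (xs : list R) : R :=
  Series (fun N => compsum (length bs) N
                     (fun ms => poch a N / poch c N * lauricella_prod bs xs ms)).

(* Substituting u = c + (y - c) t^2 removes the singularity of 1/sqrt(u - c): the
   integral becomes int_0^1 K (A0 + A1 t^2 - A2 t^4) prod_i (1 - x_i t^2)^(-b_i) dt,
   the four factors coming from 1 - u, 1 + u, a - u and b - u.  Each factor is a
   binomial series (which satisfies (1 - z) f' = b f), and their Cauchy product is the
   multiple power series of F_D.  As all |x_i| < 1 it converges uniformly on [0, 1],
   so t^(2k) times it integrates term by term; since (a)_N / (a + 1)_N = a / (a + N),
   this is F_D(a; 1, 1, 1/2, 1/2; a + 1; x) / (2a) with a = k + 1/2.  The improper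
   endpoint c is harmless because the substituted integrand is bounded. *)

From Stdlib Require Import Reals List Lra Lia.
From Coquelicot Require Import Coquelicot.
Import ListNotations.
Open Scope R_scope.

Lemma poch_pos a m : 0 < a -> 0 < poch a m.
Proof.
  intros Ha; induction m as [|m IH]; simpl; [lra|].
  pose proof (pos_INR m); apply Rmult_lt_0_compat; lra.
Qed.

Lemma poch_mul_shift a N : poch a N * (a + INR N) = a * poch (a + 1) N.
Proof.
  induction N as [|N IH]; simpl poch; [simpl; ring|].
  rewrite S_INR, <- Rmult_assoc, IH; ring.
Qed.

Definition binom_coef (b : R) (m : nat) : R := poch b m / INR (Factorial.fact m).

Lemma binom_coef_S b m :
  binom_coef b (S m) = binom_coef b m * (b + INR m) / INR (S m).
Proof.
  unfold binom_coef; simpl poch; rewrite fact_simpl, mult_INR.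
  field; split; [apply INR_fact_neq_0 | apply not_0_INR; lia].
Qed.

Lemma binom_coef_pos b m : 0 < b -> 0 < binom_coef b m.
Proof.
  intros Hb; apply Rdiv_lt_0_compat; [now apply poch_pos | apply INR_fact_lt_0].
Qed.

Lemma CV_radius_binom_coef b : 0 < b -> CV_radius (binom_coef b) = 1.
Proof.
  intros Hb.
  rewrite (CV_radius_finite_DAlembert _ 1); [now rewrite Rinv_1 | | lra |].
  - intros n; apply Rgt_not_eq, binom_coef_pos, Hb.
  - apply is_lim_seq_ext with (fun n => 1 + (b - 1) * / INR (S n)).
    { intros n; assert (Hc := binom_coef_pos b n Hb); pose proof (pos_INR n).
      rewrite binom_coef_S, S_INR, Rabs_right.
      - field; lra.
      - revert Hc; generalize (binom_coef b n); intros r Hr.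
        apply Rle_ge, Rlt_le; unfold Rdiv.
        repeat (apply Rmult_lt_0_compat || apply Rinv_0_lt_compat); lra. }
    replace (Finite 1) with (Finite (1 + (b - 1) * 0)) by (f_equal; ring).
    apply is_lim_seq_plus'; [apply is_lim_seq_const|].
    apply (is_lim_seq_scal_l _ (b - 1) 0).
    replace (Finite 0) with (Rbar_inv p_infty) by reflexivity.
    apply is_lim_seq_inv; [|discriminate].
    apply (is_lim_seq_incr_1 INR), is_lim_seq_INR.
Qed.

(* Coefficientwise: [(n + 1) c_(n+1) = b c_n + n c_n]. *)
Lemma binom_coef_ode b z : 0 < b -> Rabs z < 1 ->
  (1 - z) * PSeries (PS_derive (binom_coef b)) z = b * PSeries (binom_coef b) z.
Proof.
  intros Hb Hz.
  assert (Hr : Rbar_lt (Rabs z) (CV_radius (binom_coef b)))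
    by (rewrite CV_radius_binom_coef by lra; exact Hz).
  assert (Hr' : Rbar_lt (Rabs z) (CV_radius (PS_derive (binom_coef b))))
    by (rewrite CV_radius_derive; exact Hr).
  assert (Hcoef : forall n, PS_derive (binom_coef b) n
    = PS_plus (PS_scal b (binom_coef b)) (PS_incr_1 (PS_derive (binom_coef b))) n).
  { intros n; unfold PS_derive, PS_plus, PS_scal, PS_incr_1.
    rewrite binom_coef_S; pose proof (pos_INR n).
    destruct n as [|n]; cbn -[INR binom_coef].
    - change (@eq R (INR 1 * (binom_coef b 0 * (b + INR 0) / INR 1))
                    (b * binom_coef b 0 + 0)).
      simpl; field.
    - change (@eq R (INR (S (S n)) * (binom_coef b (S n) * (b + INR (S n)) / INR (S (S n))))
                    (b * binom_coef b (S n) + INR (S n) * binom_coef b (S n))).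
      field; apply not_0_INR; lia. }
  assert (HD : PSeries (PS_derive (binom_coef b)) z
               = b * PSeries (binom_coef b) z + z * PSeries (PS_derive (binom_coef b)) z).
  { rewrite (PSeries_ext _ _ z Hcoef) at 1.
    rewrite PSeries_plus, PSeries_scal, PSeries_incr_1; [reflexivity| |].
    - apply ex_pseries_scal; [apply Rmult_comm|]. now apply CV_radius_inside.
    - apply ex_pseries_incr_1. now apply CV_radius_inside. }
  rewrite Rmult_minus_distr_r, Rmult_1_l, HD at 1; ring.
Qed.

Lemma PSeries_binom_coef b z : 0 < b -> Rabs z < 1 ->
  PSeries (binom_coef b) z = Rpower (1 - z) (- b).
Proof.
  intros Hb Hz.
  set (g := fun t => PSeries (binom_coef b) t * Rpower (1 - t) b).
  assert (Hg' : forall t, Rabs (t - 0) <= Rabs z -> is_derive g t 0).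
  { intros t Ht; rewrite Rminus_0_r in Ht.
    assert (Ht1 : Rabs t < 1) by lra.
    assert (Ht0 : 0 < 1 - t) by (apply Rabs_def2 in Ht1; lra).
    assert (HP := is_derive_PSeries (binom_coef b) t
                    ltac:(rewrite CV_radius_binom_coef by lra; exact Ht1)).
    assert (HR : is_derive (fun t => Rpower (1 - t) b) t (- b / (1 - t) * Rpower (1 - t) b)).
    { unfold Rpower; auto_derive; [exact Ht0|]. unfold Rminus; field; lra. }
    replace 0 with (PSeries (PS_derive (binom_coef b)) t * Rpower (1 - t) b
                    + PSeries (binom_coef b) t * (- b / (1 - t) * Rpower (1 - t) b)).
    - exact (is_derive_mult _ _ _ _ _ HP HR Rmult_comm).
    - transitivity (Rpower (1 - t) b / (1 - t) *
        ((1 - t) * PSeries (PS_derive (binom_coef b)) t - b * PSeries (binom_coef b) t)).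
      + field; lra.
      + rewrite binom_coef_ode by assumption; ring. }
  destruct (MVT_cor4 g (fun _ => 0) 0 (Rabs z) Hg' z ltac:(rewrite Rminus_0_r; lra))
    as [t [Hgz _]].
  unfold g in Hgz; rewrite PSeries_0, Rminus_0_r, Rmult_0_l in Hgz.
  replace (Rpower 1 b) with 1 in Hgz
    by (unfold Rpower; rewrite ln_1, Rmult_0_r, exp_0; reflexivity).
  replace (binom_coef b 0) with 1 in Hgz by (unfold binom_coef; simpl; field).
  rewrite Rpower_Ropp.
  assert (0 < Rpower (1 - z) b) by apply exp_pos.
  apply (Rmult_eq_reg_r (Rpower (1 - z) b)); [|lra].
  rewrite Rinv_l; lra.
Qed.

Lemma is_series_binom b z : 0 < b -> Rabs z < 1 ->
  is_series (fun m => binom_coef b m * z ^ m) (Rpower (1 - z) (- b))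
  /\ ex_series (fun m => Rabs (binom_coef b m * z ^ m)).
Proof.
  intros Hb Hz.
  assert (Hr : Rbar_lt (Rabs z) (CV_radius (binom_coef b)))
    by (rewrite CV_radius_binom_coef by lra; exact Hz).
  split; [|now apply CV_disk_inside].
  apply is_pseries_R; rewrite <- PSeries_binom_coef by assumption.
  now apply PSeries_correct, CV_radius_inside.
Qed.

Fixpoint lauricella_kernel (bs xs : list R) (v : R) : R :=
  match bs, xs with
  | b :: bs', x :: xs' => Rpower (1 - x * v) (- b) * lauricella_kernel bs' xs' v
  | _, _ => 1
  end.

Definition fd_coef (bs xs : list R) (N : nat) : R :=
  compsum (length bs) N (lauricella_prod bs xs).

Lemma compsum_scal n N g k : compsum n N (fun l => k * g l) = k * compsum n N g.
Proof.
  revert N g; induction n as [|n IH]; intros N g; simpl.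
  - destruct (Nat.eqb N 0); ring.
  - rewrite scal_sum; apply sum_eq; intros i _; rewrite IH; ring.
Qed.

Lemma fd_coef_nil_pow v N : fd_coef [] [] N * v ^ N = 0 ^ N.
Proof. unfold fd_coef; destruct N; simpl; ring. Qed.

Lemma fd_coef_cons_pow b bs x xs v N :
  fd_coef (b :: bs) (x :: xs) N * v ^ N
  = sum_f_R0 (fun k => binom_coef b k * (x * v) ^ k
                       * (fd_coef bs xs (N - k) * v ^ (N - k))) N.
Proof.
  unfold fd_coef; simpl length; simpl compsum.
  rewrite Rmult_comm, scal_sum; apply sum_eq; intros k Hk.
  rewrite compsum_scal, Rpow_mult_distr.
  replace (v ^ N) with (v ^ k * v ^ (N - k)) by (rewrite <- pow_add; f_equal; lia).
  unfold binom_coef; ring.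
Qed.

Lemma ex_series_Rabs_cauchy (A B : nat -> R) :
  ex_series (fun n => Rabs (A n)) -> ex_series (fun n => Rabs (B n)) ->
  ex_series (fun n => Rabs (sum_f_R0 (fun k => A k * B (n - k)%nat) n)).
Proof.
  intros [la HA] [lb HB].
  apply (@ex_series_le R_AbsRing R_CompleteNormedModule)
    with (fun n => sum_f_R0 (fun k => Rabs (A k) * Rabs (B (n - k)%nat)) n).
  - intros n; unfold norm; simpl; unfold abs; simpl; rewrite Rabs_Rabsolu.
    eapply Rle_trans; [apply sum_f_R0_triangle|].
    right; apply sum_eq; intros; apply Rabs_mult.
  - eexists; apply (is_series_mult _ _ la lb HA HB);
      [exists la | exists lb]; eapply is_series_ext; try eassumption;
      intros; simpl; rewrite Rabs_Rabsolu; reflexivity.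
Qed.

Lemma is_series_fd_coef bs xs v :
  length bs = length xs -> List.Forall (Rlt 0) bs -> List.Forall (fun x => Rabs (x * v) < 1) xs ->
  is_series (fun N => fd_coef bs xs N * v ^ N) (lauricella_kernel bs xs v)
  /\ ex_series (fun N => Rabs (fd_coef bs xs N * v ^ N)).
Proof.
  revert xs; induction bs as [|b bs IH]; intros [|x xs] Hl Hb Hx; try discriminate.
  - assert (Hgeom : is_series (fun N => 0 ^ N) 1).
    { replace 1 with (/ (1 - 0)) by (field; lra).
      apply is_series_geom; rewrite Rabs_R0; lra. }
    split; [|exists 1]; eapply is_series_ext; try exact Hgeom;
      intros N; rewrite fd_coef_nil_pow; [|rewrite <- RPow_abs, Rabs_R0]; reflexivity.
  - injection Hl as Hl; inversion Hb as [|? ? Hb0 Hbs]; inversion Hx as [|? ? Hx0 Hxs]; subst.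
    destruct (is_series_binom b (x * v) Hb0 Hx0) as [HA HAabs].
    destruct (IH xs Hl Hbs Hxs) as [HB HBabs].
    split.
    + eapply is_series_ext; [intros N; symmetry; apply fd_coef_cons_pow|].
      exact (is_series_mult _ _ _ _ HA HB HAabs HBabs).
    + assert (Hc := ex_series_Rabs_cauchy _ _ HAabs HBabs).
      eapply ex_series_ext; [|exact Hc].
      intros N; cbv beta; rewrite fd_coef_cons_pow; reflexivity.
Qed.

Lemma pow_le_1 v n : 0 <= v <= 1 -> 0 <= v ^ n <= 1.
Proof.
  intros Hv; induction n as [|n IH]; simpl; [lra|].
  split; [apply Rmult_le_pos|]; nra.
Qed.

Lemma Rabs_Series_sub_sum_le (a b : nat -> R) M :
  (forall n, Rabs (a n) <= b n) -> ex_series b ->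
  Rabs (Series a - sum_f_R0 a M) <= Series b - sum_f_R0 b M.
Proof.
  intros Hab Hb.
  assert (Habs : ex_series (fun n => Rabs (a n))).
  { apply (@ex_series_le R_AbsRing R_CompleteNormedModule) with b; [|exact Hb].
    intros n; unfold norm; simpl; unfold abs; simpl; rewrite Rabs_Rabsolu; apply Hab. }
  rewrite (Series_incr_n a (S M)), (Series_incr_n b (S M))
    by (lia || assumption || now apply ex_series_Rabs).
  simpl pred.
  match goal with |- Rabs (?s + ?t - ?s) <= ?s' + ?u - ?s' =>
    replace (s + t - s) with t by ring; replace (s' + u - s') with u by ring end.
  eapply Rle_trans; [apply Series_Rabs|].
  - now apply (ex_series_incr_n (fun n => Rabs (a n)) (S M)).
  - apply Series_le; [|now apply (ex_series_incr_n b (S M))].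
    intros n; split; [apply Rabs_pos | apply Hab].
Qed.

Lemma is_RInt_pow_01 n : is_RInt (fun t => t ^ n) 0 1 (/ INR (S n)).
Proof.
  replace (/ INR (S n)) with (1 ^ S n / INR (S n) - 0 ^ S n / INR (S n)).
  - apply is_RInt_pow.
  - rewrite pow1, pow_i by lia; field; apply not_0_INR; lia.
Qed.

(* [filterlim_RInt] needs uniform convergence on all of [R], so the partial
   sums are evaluated at the clamped point [clamp01 t], which changes nothing on
   [[0, 1]]. *)
Definition clamp01 (t : R) : R := Rmax 0 (Rmin 1 t).

Lemma clamp01_range t : 0 <= clamp01 t <= 1.
Proof. unfold clamp01, Rmax, Rmin; repeat destruct Rle_dec; lra. Qed.

Lemma clamp01_id t : 0 <= t <= 1 -> clamp01 t = t.
Proof. intros Ht; unfold clamp01, Rmax, Rmin; repeat destruct Rle_dec; lra. Qed.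

Lemma Rabs_Series_pow_sub_sum_le (C : nat -> R) v M :
  0 <= v <= 1 -> ex_series (fun N => Rabs (C N)) ->
  Rabs (Series (fun N => C N * v ^ N) - sum_f_R0 (fun N => C N * v ^ N) M)
    <= Series (fun N => Rabs (C N)) - sum_f_R0 (fun N => Rabs (C N)) M.
Proof.
  intros Hv HC; apply Rabs_Series_sub_sum_le; [|exact HC].
  intros N; assert (HN := pow_le_1 v N Hv); pose proof (Rabs_pos (C N)).
  rewrite Rabs_mult, (Rabs_right (v ^ N)) by lra; nra.
Qed.

Lemma is_RInt_clamp01_monomial (C : R) j N :
  is_RInt (fun t => clamp01 t ^ j * (C * (clamp01 t ^ 2) ^ N)) 0 1
    (C / INR (2 * N + j + 1)).
Proof.
  replace (2 * N + j + 1)%nat with (S (2 * N + j)) by lia.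
  change (C / INR (S (2 * N + j))) with (scal C (/ INR (S (2 * N + j)))).
  eapply is_RInt_ext; [|apply (is_RInt_scal (V := R_NormedModule)), is_RInt_pow_01].
  intros t Ht; rewrite Rmin_left, Rmax_right in Ht by lra.
  rewrite clamp01_id by lra.
  change (@eq R (C * t ^ (2 * N + j)) (t ^ j * (C * (t ^ 2) ^ N))).
  rewrite pow_add, pow_mult; ring.
Qed.

Lemma filterlim_clamp01_partial_sums (C : nat -> R) j :
  ex_series (fun N => Rabs (C N)) ->
  filterlim (fun M t => clamp01 t ^ j * sum_f_R0 (fun N => C N * (clamp01 t ^ 2) ^ N) M)
    eventually
    (locally ((fun t => clamp01 t ^ j * Series (fun N => C N * (clamp01 t ^ 2) ^ N))
              : fct_UniformSpace R R_CompleteNormedModule)).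
Proof.
  intros [S HS]; apply filterlim_locally; intros eps.
  destruct (proj1 (filterlim_locally _ _) HS eps) as [M0 HM0].
  exists M0; intros M HM t.
  specialize (HM0 M HM); change (Rabs (sum_n (fun N => Rabs (C N)) M - S) < eps) in HM0.
  rewrite sum_n_Reals, Rabs_minus_sym in HM0.
  set (s := clamp01 t).
  change (Rabs (s ^ j * sum_f_R0 (fun N => C N * (s ^ 2) ^ N) M
                - s ^ j * Series (fun N => C N * (s ^ 2) ^ N)) < eps).
  destruct (pow_le_1 s j (clamp01_range t)) as [Hs0 Hs1].
  assert (Htail := Rabs_Series_pow_sub_sum_le C (s ^ 2) M
                     (pow_le_1 _ 2 (clamp01_range t)) (ex_intro _ S HS)).
  rewrite (is_series_unique _ _ HS) in Htail.
  rewrite <- Rmult_minus_distr_l, Rabs_mult, Rabs_minus_sym, (Rabs_right (s ^ j)) by lra.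
  pose proof (Rle_abs (S - sum_f_R0 (fun N => Rabs (C N)) M)).
  pose proof (Rabs_pos (Series (fun N => C N * (s ^ 2) ^ N)
                        - sum_f_R0 (fun N => C N * (s ^ 2) ^ N) M)).
  nra.
Qed.

Lemma is_RInt_pow_mul_series (C : nat -> R) j :
  ex_series (fun N => Rabs (C N)) ->
  is_RInt (fun t => t ^ j * Series (fun N => C N * (t ^ 2) ^ N)) 0 1
    (Series (fun N => C N / INR (2 * N + j + 1))).
Proof.
  intros HC.
  set (partial := fun M t => clamp01 t ^ j * sum_f_R0 (fun N => C N * (clamp01 t ^ 2) ^ N) M).
  assert (Hpartial : forall M, is_RInt (partial M) 0 1
                                 (sum_f_R0 (fun N => C N / INR (2 * N + j + 1)) M)).
  { induction M as [|M IH]; simpl.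
    - apply is_RInt_clamp01_monomial.
    - eapply is_RInt_ext;
        [|exact (is_RInt_plus _ _ _ _ _ _ IH (is_RInt_clamp01_monomial (C (S M)) j (S M)))].
      intros t _; unfold partial, plus; simpl; ring. }
  destruct (filterlim_RInt _ 0 1 eventually eventually_filter _ _ Hpartial
              (filterlim_clamp01_partial_sums C j HC)) as [I [HI HgI]].
  replace (Series (fun N => C N / INR (2 * N + j + 1))) with I.
  - eapply is_RInt_ext; [|exact HgI].
    intros t Ht; rewrite Rmin_left, Rmax_right in Ht by lra.
    cbv beta; rewrite clamp01_id by lra; reflexivity.
  - symmetry; apply is_series_unique.
    eapply filterlim_ext; [|exact HI]; intros M; symmetry; apply sum_n_Reals.
Qed.

Lemma LauricellaFD_c_succ a bs xs : 0 < a ->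
  LauricellaFD a bs (a + 1) xs = a * Series (fun N => fd_coef bs xs N / (a + INR N)).
Proof.
  intros Ha; unfold LauricellaFD; rewrite <- Series_scal_l; apply Series_ext; intros N.
  rewrite compsum_scal; fold (fd_coef bs xs N).
  assert (Hshift := poch_mul_shift a N).
  pose proof (poch_pos a N Ha); pose proof (poch_pos (a + 1) N ltac:(lra)); pose proof (pos_INR N).
  assert (Hratio : poch a N / poch (a + 1) N = a / (a + INR N)).
  { apply (Rmult_eq_reg_r (poch (a + 1) N * (a + INR N))); [|nra].
    transitivity (poch a N * (a + INR N)); [field; lra|].
    rewrite Hshift; field; lra. }
  rewrite Hratio; field; lra.
Qed.

Section LauricellaKernel.

Variables bs xs : list R.
Hypothesis Hlen : length bs = length xs.
Hypothesis Hbs : List.Forall (Rlt 0) bs.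
Hypothesis Hxs : List.Forall (fun x => Rabs x < 1) xs.

Lemma is_series_lauricella_kernel v : 0 <= v <= 1 ->
  is_series (fun N => fd_coef bs xs N * v ^ N) (lauricella_kernel bs xs v)
  /\ ex_series (fun N => Rabs (fd_coef bs xs N * v ^ N)).
Proof.
  intros Hv; apply is_series_fd_coef; [exact Hlen | exact Hbs|].
  eapply List.Forall_impl; [|exact Hxs]; intros x Hx.
  rewrite Rabs_mult, (Rabs_right v) by lra; pose proof (Rabs_pos x); nra.
Qed.

Lemma ex_series_Rabs_fd_coef : ex_series (fun N => Rabs (fd_coef bs xs N)).
Proof.
  apply ex_series_ext with (fun N => Rabs (fd_coef bs xs N * 1 ^ N)).
  - intros N; rewrite pow1, Rmult_1_r; reflexivity.
  - exact (proj2 (is_series_lauricella_kernel 1 ltac:(lra))).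
Qed.

Lemma Rabs_lauricella_kernel_le v : 0 <= v <= 1 ->
  Rabs (lauricella_kernel bs xs v) <= Series (fun N => Rabs (fd_coef bs xs N)).
Proof.
  intros Hv; destruct (is_series_lauricella_kernel v Hv) as [Hser Habs].
  rewrite <- (is_series_unique _ _ Hser).
  eapply Rle_trans; [exact (Series_Rabs _ Habs)|].
  apply Series_le; [|exact ex_series_Rabs_fd_coef].
  intros N; split; [apply Rabs_pos|].
  assert (HN := pow_le_1 v N Hv); pose proof (Rabs_pos (fd_coef bs xs N)).
  rewrite Rabs_mult, (Rabs_right (v ^ N)) by lra; nra.
Qed.

(* With [u = t^2] this is the Euler integral
   [F_D(a; bs; a + 1; xs) = a * int_0^1 u^(a-1) prod_i (1 - x_i u)^(-b_i) du]
   for half-integral [a = (j + 1) / 2]. *)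
Lemma is_RInt_lauricella_kernel j a c : a = (INR j + 1) / 2 -> c = a + 1 ->
  is_RInt (fun t => t ^ j * lauricella_kernel bs xs (t ^ 2)) 0 1
    (LauricellaFD a bs c xs / (2 * a)).
Proof.
  intros Ha ->; pose proof (pos_INR j).
  replace (LauricellaFD a bs (a + 1) xs / (2 * a))
    with (Series (fun N => fd_coef bs xs N / INR (2 * N + j + 1))).
  - eapply is_RInt_ext; [|exact (is_RInt_pow_mul_series _ j ex_series_Rabs_fd_coef)].
    intros t Ht; rewrite Rmin_left, Rmax_right in Ht by lra; cbv beta.
    destruct (is_series_lauricella_kernel (t ^ 2) (pow_le_1 t 2 ltac:(lra))) as [Hser _].
    now rewrite (is_series_unique _ _ Hser).
  - rewrite LauricellaFD_c_succ by lra.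
    replace (a * _ / (2 * a)) with (/ 2 * Series (fun N => fd_coef bs xs N / (a + INR N)))
      by (field; lra).
    rewrite <- Series_scal_l; apply Series_ext; intros N.
    rewrite Ha, !plus_INR, mult_INR; simpl INR.
    field; pose proof (pos_INR N); lra.
Qed.

End LauricellaKernel.

Lemma is_RInt_gen_at_right_of_lim (f : R -> R) c y L :
  c < y -> (forall e, c < e < y -> ex_RInt f e y) ->
  filterlim (fun e => RInt f e y) (at_right c) (locally L) ->
  is_RInt_gen f (at_right c) (at_point y) L.
Proof.
  intros Hcy Hex Hlim P HP.
  destruct (Hlim P HP) as [d Hd].
  assert (Hd' : 0 < Rmin d (y - c)) by (apply Rmin_pos; [apply cond_pos | lra]).
  apply (Filter_prod _ _ _ (fun e => c < e < c + Rmin d (y - c)) (fun z => z = y)).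
  - exists (mkposreal _ Hd'); intros e He Hce.
    change (Rabs (e - c) < Rmin d (y - c)) in He; apply Rabs_def2 in He; lra.
  - reflexivity.
  - intros e z He ->; simpl.
    assert (Hmin := Rmin_l d (y - c)); assert (Hmin' := Rmin_r d (y - c)).
    exists (RInt f e y); split.
    + apply (RInt_correct (V := R_CompleteNormedModule)), Hex; lra.
    + apply Hd; [|lra].
      change (Rabs (e - c) < d); rewrite Rabs_right; lra.
Qed.

Lemma filterlim_RInt_lower_at_right (H : R -> R) a b L M :
  a < b -> is_RInt H a b L -> (forall t, a <= t <= b -> Rabs (H t) <= M) ->
  filterlim (fun s => RInt H s b) (at_right a) (locally L).
Proof.
  intros Hab HL HM P [eps Heps].
  assert (HM0 : 0 <= M) by (eapply Rle_trans; [apply Rabs_pos | apply (HM a); lra]).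
  assert (Hd : 0 < Rmin (b - a) (eps / (M + 1)))
    by (apply Rmin_pos; [lra | apply Rdiv_lt_0_compat; [apply cond_pos | lra]]).
  exists (mkposreal _ Hd); intros s Hs Has; apply Heps.
  change (Rabs (s - a) < Rmin (b - a) (eps / (M + 1))) in Hs.
  rewrite Rabs_right in Hs by lra.
  assert (Hsb := Rmin_l (b - a) (eps / (M + 1))).
  assert (Hse := Rmin_r (b - a) (eps / (M + 1))).
  assert (Hex : ex_RInt (V := R_CompleteNormedModule) H a b) by (exists L; exact HL).
  assert (Has' : ex_RInt (V := R_CompleteNormedModule) H a s)
    by (apply ex_RInt_Chasles_1 with b; [lra | exact Hex]).
  assert (Hsb' : ex_RInt (V := R_CompleteNormedModule) H s b)
    by (apply ex_RInt_Chasles_2 with a; [lra | exact Hex]).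
  assert (Hsplit := RInt_Chasles H a s b Has' Hsb').
  rewrite (is_RInt_unique _ _ _ _ HL) in Hsplit.
  change (RInt H a s + RInt H s b = L) in Hsplit.
  assert (Hbound := abs_RInt_le_const H a s M ltac:(lra) Has'
                      ltac:(intros t Ht; apply HM; lra)).
  change (Rabs (RInt H s b - L) < eps).
  replace (RInt H s b - L) with (- RInt H a s) by lra; rewrite Rabs_Ropp.
  assert (Heps1 : (s - a) * (M + 1) < eps).
  { apply Rlt_le_trans with (eps / (M + 1) * (M + 1)); [apply Rmult_lt_compat_r; lra|].
    right; field; lra. }
  nra.
Qed.

Lemma filterlim_sqrt_scaled_at_right c d : 0 < d ->
  filterlim (fun e => sqrt ((e - c) / d)) (at_right c) (at_right 0).
Proof.
  intros Hd P [eps HP].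
  assert (Hde : 0 < d * (eps * eps)) by (pose proof (cond_pos eps); apply Rmult_lt_0_compat; nra).
  exists (mkposreal _ Hde); intros e He Hce.
  change (Rabs (e - c) < d * (eps * eps)) in He; rewrite Rabs_right in He by lra.
  assert (Hq : 0 < (e - c) / d) by (apply Rdiv_lt_0_compat; lra).
  apply HP; [|now apply sqrt_lt_R0].
  change (Rabs (sqrt ((e - c) / d) - 0) < eps).
  rewrite Rminus_0_r, Rabs_right by (apply Rle_ge, sqrt_pos).
  rewrite <- (sqrt_square eps) by (pose proof (cond_pos eps); lra).
  apply sqrt_lt_1_alt; split; [lra|].
  apply (Rmult_lt_reg_l d); [lra|]. unfold Rdiv; rewrite <- Rmult_assoc, Rinv_r_simpl_m; lra.
Qed.

Section SquareSubstitution.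

Variables (f H : R -> R) (c y : R).
Hypothesis Hcy : c < y.
Hypothesis Hf : forall u, c < u <= y -> continuous f u.
Hypothesis HfH : forall t, 0 < t <= 1 -> 2 * (y - c) * t * f (c + (y - c) * t ^ 2) = H t.

Lemma is_RInt_sqr_subst e : c < e <= y ->
  is_RInt H (sqrt ((e - c) / (y - c))) 1 (RInt f e y).
Proof.
  intros He.
  set (t0 := sqrt ((e - c) / (y - c))).
  assert (Hq : 0 < (e - c) / (y - c) <= 1).
  { split; [apply Rdiv_lt_0_compat; lra|].
    apply (Rmult_le_reg_r (y - c)); [lra|]. unfold Rdiv; rewrite Rmult_assoc, Rinv_l; lra. }
  assert (Ht0 : 0 < t0 <= 1).
  { split; [now apply sqrt_lt_R0|]. rewrite <- sqrt_1; apply sqrt_le_1_alt; lra. }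
  assert (Ht0sq : c + (y - c) * t0 ^ 2 = e).
  { unfold t0; rewrite <- Rsqr_pow2, Rsqr_sqrt by lra; field; lra. }
  replace (RInt f e y) with (RInt f (c + (y - c) * t0 ^ 2) (c + (y - c) * 1 ^ 2))
    by (rewrite Ht0sq; f_equal; ring).
  eapply is_RInt_ext;
    [|apply (is_RInt_comp f (fun t => c + (y - c) * t ^ 2) (fun t => 2 * (y - c) * t))].
  - intros t Ht; rewrite Rmin_left, Rmax_right in Ht by lra; apply HfH; lra.
  - intros t Ht; rewrite Rmin_left, Rmax_right in Ht by lra; apply Hf.
    assert (0 < t ^ 2 <= 1) by (simpl; split; nra).
    nra.
  - intros t _; split.
    + auto_derive; [exact I | ring].
    + apply (@ex_derive_continuous R_AbsRing R_NormedModule); auto_derive; exact I.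
Qed.

Lemma is_RInt_gen_sqr_subst L M :
  is_RInt H 0 1 L -> (forall t, 0 <= t <= 1 -> Rabs (H t) <= M) ->
  is_RInt_gen f (at_right c) (at_point y) L.
Proof.
  intros HL HM.
  apply is_RInt_gen_at_right_of_lim; [exact Hcy| |].
  - intros e He; apply (ex_RInt_continuous (V := R_CompleteNormedModule)).
    intros u Hu; rewrite Rmin_left, Rmax_right in Hu by lra; apply Hf; lra.
  - apply filterlim_ext_loc with (fun e => RInt H (sqrt ((e - c) / (y - c))) 1).
    + assert (Hyc : 0 < y - c) by lra.
      exists (mkposreal _ Hyc); intros e He Hce.
      change (Rabs (e - c) < y - c) in He; rewrite Rabs_right in He by lra.
      apply is_RInt_unique, is_RInt_sqr_subst; lra.
    + assert (Hsqrt := filterlim_sqrt_scaled_at_right c (y - c) ltac:(lra)).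
      exact (filterlim_comp _ _ _ _ _ _ _ _ Hsqrt
               (filterlim_RInt_lower_at_right H 0 1 L M Rlt_0_1 HL HM)).
Qed.

End SquareSubstitution.

Lemma Rpower_opp_1 x : 0 < x -> Rpower x (Ropp 1) = / x.
Proof. intros Hx; now rewrite Rpower_Ropp, Rpower_1. Qed.

Lemma Rpower_opp_half x : 0 < x -> Rpower x (- (1 / 2)) = / sqrt x.
Proof.
  intros Hx; replace (1 / 2) with (/ 2) by field.
  now rewrite Rpower_Ropp, Rpower_sqrt.
Qed.

Lemma Rabs_div_lt_1 p q : 0 < p < Rabs q -> Rabs (p / q) < 1.
Proof.
  intros Hpq; unfold Rdiv; rewrite Rabs_mult, Rabs_inv, (Rabs_right p) by lra.
  apply (Rmult_lt_reg_r (Rabs q)); [lra|]; rewrite Rmult_assoc, Rinv_l; lra.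
Qed.

Definition integrand (a b c alpha u : R) : R :=
  (1 - alpha * u) / (1 - u ^ 2) * (u / sqrt ((a - u) * (b - u) * (u - c))).

Definition lauricella_params : list R := [1; 1; 1 / 2; 1 / 2].

Section Substitution.

Variables a b c y alpha : R.
Hypothesis hc : 0 < c.
Hypothesis hcy : c < y.
Hypothesis hy1 : y < 1.
Hypothesis hyb : y < b.
Hypothesis hba : b < a.

Definition lauricella_args : list R :=
  [(y - c) / (1 - c); - ((y - c) / (1 + c)); - ((y - c) / (c - a)); - ((y - c) / (c - b))].

Definition prefactor : R := sqrt (y - c) / ((1 - c ^ 2) * sqrt ((a - c) * (b - c))).

Definition subst_poly (t : R) : R :=
  2 * c * (1 - c * alpha) + 2 * (1 - 2 * c * alpha) * (y - c) * t ^ 2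
  - 2 * alpha * (y - c) ^ 2 * t ^ 4.

Definition subst_integrand (t : R) : R :=
  prefactor * subst_poly t * lauricella_kernel lauricella_params lauricella_args (t ^ 2).

Lemma lauricella_args_lt_1 : List.Forall (fun x => Rabs x < 1) lauricella_args.
Proof.
  unfold lauricella_args; repeat constructor; rewrite ?Rabs_Ropp; apply Rabs_div_lt_1;
    split; try lra; unfold Rabs; destruct Rcase_abs; lra.
Qed.

Lemma integrand_continuous u : c < u <= y -> continuous (integrand a b c alpha) u.
Proof.
  intros Hu.
  assert (Hprod : 0 < (a - u) * (b - u) * (u - c))
    by (apply Rmult_lt_0_compat; [apply Rmult_lt_0_compat|]; lra).
  assert (Hsqrt := sqrt_lt_R0 _ Hprod).
  apply (@ex_derive_continuous R_AbsRing R_NormedModule); unfold integrand.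
  auto_derive; repeat split; try lra; apply Rgt_not_eq; [nra | exact Hsqrt].
Qed.

Lemma integrand_sqr_subst t : 0 < t <= 1 ->
  2 * (y - c) * t * integrand a b c alpha (c + (y - c) * t ^ 2) = subst_integrand t.
Proof.
  intros ht; unfold integrand, subst_integrand, subst_poly, prefactor.
  assert (Hv : 0 < t ^ 2 <= 1) by (simpl; split; nra).
  set (v := t ^ 2) in *.
  assert (Hpoly : 2 * c * (1 - c * alpha) + 2 * (1 - 2 * c * alpha) * (y - c) * v
                  - 2 * alpha * (y - c) ^ 2 * t ^ 4
                  = 2 * ((1 - alpha * (c + (y - c) * v)) * (c + (y - c) * v)))
    by (unfold v; ring).
  rewrite Hpoly.
  set (u := c + (y - c) * v).
  assert (Hu : c < u <= y) by (unfold u; nra).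
  assert (E1 : 1 - (y - c) / (1 - c) * v = (1 - u) / (1 - c)) by (unfold u; field; lra).
  assert (E2 : 1 - - ((y - c) / (1 + c)) * v = (1 + u) / (1 + c)) by (unfold u; field; lra).
  assert (E3 : 1 - - ((y - c) / (c - a)) * v = (a - u) / (a - c)) by (unfold u; field; lra).
  assert (E4 : 1 - - ((y - c) / (c - b)) * v = (b - u) / (b - c)) by (unfold u; field; lra).
  assert (P3 : 0 < (a - u) / (a - c)) by (apply Rdiv_lt_0_compat; lra).
  assert (P4 : 0 < (b - u) / (b - c)) by (apply Rdiv_lt_0_compat; lra).
  unfold lauricella_params, lauricella_args; simpl lauricella_kernel.
  rewrite E1, E2, E3, E4, !Rpower_opp_1, !Rpower_opp_half by (apply Rdiv_lt_0_compat; lra).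
  set (sd := sqrt (y - c)); set (s1 := sqrt ((a - c) * (b - c))).
  set (s3 := sqrt ((a - u) / (a - c))); set (s4 := sqrt ((b - u) / (b - c))).
  assert (Hsd : sd * sd = y - c) by (apply sqrt_sqrt; lra).
  assert (Hs1 : 0 < s1) by (apply sqrt_lt_R0, Rmult_lt_0_compat; lra).
  assert (Hsd0 : 0 < sd) by (apply sqrt_lt_R0; lra).
  assert (Hs3 : 0 < s3) by (now apply sqrt_lt_R0).
  assert (Hs4 : 0 < s4) by (now apply sqrt_lt_R0).
  assert (Hroot : sqrt ((a - u) * (b - u) * (u - c)) = s1 * sd * t * s3 * s4).
  { rewrite <- (sqrt_square (s1 * sd * t * s3 * s4))
      by (apply Rlt_le; repeat apply Rmult_lt_0_compat; lra).
    f_equal.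
    transitivity ((s1 * s1) * (sd * sd) * (t * t) * (s3 * s3) * (s4 * s4)); [|ring].
    unfold s1, s3, s4; rewrite Hsd, !sqrt_sqrt by (lra || apply Rlt_le, Rmult_lt_0_compat; lra).
    unfold u, v; field; lra. }
  (* [field] cannot use [sd * sd = y - c], so it is substituted by hand. *)
  rewrite Hroot; replace (2 * (y - c) * t) with (2 * (sd * sd) * t) by (rewrite Hsd; reflexivity).
  assert (Hu2 : 1 - u ^ 2 <> 0) by (apply Rgt_not_eq; nra).
  field; repeat split; (assumption || lra || nra).
Qed.

Lemma is_RInt_subst_integrand :
  is_RInt subst_integrand 0 1
    (prefactor *
     (2 * c * (1 - c * alpha) * LauricellaFD (1 / 2) lauricella_params (3 / 2) lauricella_args
      + 2 / 3 * (1 - 2 * c * alpha) * (y - c)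
          * LauricellaFD (3 / 2) lauricella_params (5 / 2) lauricella_args
      - 2 / 5 * alpha * (y - c) ^ 2
          * LauricellaFD (5 / 2) lauricella_params (7 / 2) lauricella_args)).
Proof.
  assert (Hlen : length lauricella_params = length lauricella_args) by reflexivity.
  assert (Hbs : List.Forall (Rlt 0) lauricella_params) by (repeat constructor; lra).
  assert (Heuler := is_RInt_lauricella_kernel _ _ Hlen Hbs lauricella_args_lt_1).
  assert (IX := Heuler 0%nat (1 / 2) (3 / 2) ltac:(simpl; lra) ltac:(lra)).
  assert (IY := Heuler 2%nat (3 / 2) (5 / 2) ltac:(simpl; lra) ltac:(lra)).
  assert (IZ := Heuler 4%nat (5 / 2) (7 / 2) ltac:(simpl; lra) ltac:(lra)).
  set (X := LauricellaFD (1 / 2) lauricella_params (3 / 2) lauricella_args) in *.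
  set (Y := LauricellaFD (3 / 2) lauricella_params (5 / 2) lauricella_args) in *.
  set (Z := LauricellaFD (5 / 2) lauricella_params (7 / 2) lauricella_args) in *.
  set (A0 := 2 * c * (1 - c * alpha)); set (A1 := 2 * (1 - 2 * c * alpha) * (y - c));
    set (A2 := 2 * alpha * (y - c) ^ 2).
  match goal with |- is_RInt _ _ _ ?L =>
    replace L with (prefactor * (A0 * (X / (2 * (1 / 2))) + A1 * (Y / (2 * (3 / 2)))
                                 - A2 * (Z / (2 * (5 / 2)))))
      by (unfold A1, A2; field) end.
  eapply is_RInt_ext; [|exact (is_RInt_scal _ _ _ prefactor _ (is_RInt_minus _ _ _ _ _ _
    (is_RInt_plus _ _ _ _ _ _ (is_RInt_scal _ _ _ A0 _ IX) (is_RInt_scal _ _ _ A1 _ IY))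
    (is_RInt_scal _ _ _ A2 _ IZ)))].
  intros t _; unfold subst_integrand, subst_poly.
  set (k := lauricella_kernel lauricella_params lauricella_args (t ^ 2)).
  change (@eq R (prefactor * (A0 * (t ^ 0 * k) + A1 * (t ^ 2 * k) - A2 * (t ^ 4 * k)))
                (prefactor * (A0 + A1 * t ^ 2 - A2 * t ^ 4) * k)).
  ring.
Qed.

Lemma subst_integrand_bounded :
  exists M, forall t, 0 <= t <= 1 -> Rabs (subst_integrand t) <= M.
Proof.
  set (A0 := 2 * c * (1 - c * alpha)); set (A1 := 2 * (1 - 2 * c * alpha) * (y - c));
    set (A2 := 2 * alpha * (y - c) ^ 2).
  exists (Rabs prefactor * (Rabs A0 + Rabs A1 + Rabs A2)
          * Series (fun N => Rabs (fd_coef lauricella_params lauricella_args N))).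
  intros t Ht.
  destruct (pow_le_1 t 2 Ht) as [Ht2 Ht2']; destruct (pow_le_1 t 4 Ht) as [Ht4 Ht4'].
  assert (Hpoly : Rabs (subst_poly t) <= Rabs A0 + Rabs A1 + Rabs A2).
  { unfold subst_poly; fold A0 A1 A2; unfold Rminus.
    eapply Rle_trans; [apply Rabs_triang|]; rewrite Rabs_Ropp.
    eapply Rle_trans; [apply Rplus_le_compat_r, Rabs_triang|].
    rewrite !Rabs_mult, (Rabs_right (t ^ 2)), (Rabs_right (t ^ 4)) by lra.
    pose proof (Rabs_pos A1); pose proof (Rabs_pos A2); nra. }
  assert (Hkernel := Rabs_lauricella_kernel_le lauricella_params lauricella_args eq_refl
                       ltac:(repeat constructor; lra) lauricella_args_lt_1
                       (t ^ 2) (pow_le_1 t 2 Ht)).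
  unfold subst_integrand; rewrite !Rabs_mult.
  apply Rmult_le_compat; try apply Rmult_le_pos; try apply Rabs_pos; [|exact Hkernel].
  apply Rmult_le_compat_l; [apply Rabs_pos | exact Hpoly].
Qed.

End Substitution.

Theorem mainTheorem2 (a b c y alpha : R)
  (hc : 0 < c) (hcy : c < y) (hy1 : y < 1) (hyb : y < b) (hba : b < a) :
  let xs := [ (y - c) / (1 - c); - ((y - c) / (1 + c));
              - ((y - c) / (c - a)); - ((y - c) / (c - b)) ] in
  let bs := [1; 1; 1 / 2; 1 / 2] in
  let X := LauricellaFD (1 / 2) bs (3 / 2) xs in
  let Y := LauricellaFD (3 / 2) bs (5 / 2) xs in
  let Z := LauricellaFD (5 / 2) bs (7 / 2) xs in
  is_RInt_gen
    (fun u => (1 - alpha * u) / (1 - u ^ 2) *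
              (u / sqrt ((a - u) * (b - u) * (u - c))))
    (at_right c) (at_point y)
    (sqrt (y - c) / ((1 - c ^ 2) * sqrt ((a - c) * (b - c))) *
     (2 * c * (1 - c * alpha) * X
      + 2 / 3 * (1 - 2 * c * alpha) * (y - c) * Y
      - 2 / 5 * alpha * (y - c) ^ 2 * Z)).
Proof.
  intros xs bs X Y Z.
  destruct (subst_integrand_bounded a b c y alpha hc hcy hy1 hyb hba) as [M HM].
  apply (is_RInt_gen_sqr_subst (integrand a b c alpha) (subst_integrand a b c y alpha) c y hcy)
    with (M := M).
  - apply integrand_continuous; assumption.
  - apply integrand_sqr_subst; assumption.
  - apply is_RInt_subst_integrand; assumption.
  - exact HM.
Qed.
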